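(* Let $\mathcal{U}$ be a uniformity on a set $G$ generating the topology $\tau_{\mathcal{U}}$, and assume the topological space $(G,\tau_{\mathcal{U}})$ has the Hurewicz property. Then $(G,\tau_{\mathcal{U}})$ satisfies ${\sf S}_c(\mathcal{O}_{\mathcal{U}},\mathcal{O})$ if and only if it satisfies ${\sf S}_c(\mathcal{O},\mathcal{O})$.
   Context: For $V\subseteq G\times G$ and $x\in G$, $V(x)=\{y\in G:(x,y)\in V\}$. $\mathcal{O}_{\mathcal{U}}=\{\{V(x):x\in G\}: V\in\mathcal{U}\}$ is the collection of uniform covers (with respect to $\mathcal{U}$). $\mathcal{O}$ is the collection of all open covers of $(G,\tau_{\mathcal{U}})$. A family $\mathcal{B}$ refines $\mathcal{A}$ if every member of $\mathcal{B}$ is contained in some member of $\mathcal{A}$. ${\sf S}_c(\mathcal{A},\mathcal{B})$: for each sequence $(A_n:n<\infty)$ of elements of $\mathcal{A}$ there is a sequence $(B_n:n<\infty)$ such that each $B_n$ is a pairwise disjoint family of open sets refining $A_n$ and $\bigcup_nB_n\in\mathcal{B}$. A space $X$ has the Hurewicz property if for each sequence $(\mathcal{U}_n:n<\infty)$ of open covers of $X$ there are finite $\mathcal{F}_n\subseteq\mathcal{U}_n$ such that for each $x\in X$ the set $\{n:x\notin\bigcup\mathcal{F}_n\}$ is finite. *)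

From Stdlib Require Import List.

Definition set (G : Type) := G -> Prop.
Definition rel (G : Type) := G -> G -> Prop.

Definition section {G : Type} (V : rel G) (x : G) : set G := fun y => V x y.

Definition uniformity {G : Type} (U : rel G -> Prop) : Prop :=
  (exists V, U V) /\
  (forall V, U V -> forall x, V x x) /\
  (forall V W, U V -> (forall x y, V x y -> W x y) -> U W) /\
  (forall V W, U V -> U W -> U (fun x y => V x y /\ W x y)) /\
  (forall V, U V -> U (fun x y => V y x)) /\
  (forall V, U V -> exists W, U W /\
       (forall x y z, W x y -> W y z -> V x z)).

Definition uopen {G : Type} (U : rel G -> Prop) (O : set G) : Prop :=
  forall x, O x -> exists V, U V /\ (forall y, V x y -> O y).

Definition open_cover {G : Type} (opn : set G -> Prop) (A : set G -> Prop) : Prop :=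
  (forall s, A s -> opn s) /\ (forall x, exists s, A s /\ s x).

Definition uniform_cover {G : Type} (U : rel G -> Prop) (A : set G -> Prop) : Prop :=
  exists V, U V /\ (forall s, A s <-> exists x, s = section V x).

Definition refines {G : Type} (B A : set G -> Prop) : Prop :=
  forall s, B s -> exists t, A t /\ (forall x, s x -> t x).

Definition pairwise_disjoint {G : Type} (B : set G -> Prop) : Prop :=
  forall s t, B s -> B t -> s <> t -> forall x, ~ (s x /\ t x).

Definition Sc {G : Type} (opn : set G -> Prop)
    (AA BB : (set G -> Prop) -> Prop) : Prop :=
  forall A : nat -> (set G -> Prop), (forall n, AA (A n)) ->
  exists B : nat -> (set G -> Prop),
    (forall n, (forall s, B n s -> opn s) /\ pairwise_disjoint (B n)
               /\ refines (B n) (A n)) /\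
    BB (fun s => exists n, B n s).

Definition hurewicz {G : Type} (opn : set G -> Prop) : Prop :=
  forall Uc : nat -> (set G -> Prop), (forall n, open_cover opn (Uc n)) ->
  exists F : nat -> list (set G),
    (forall n s, In s (F n) -> Uc n s) /\
    (forall x, exists N, forall n, N <= n -> exists s, In s (F n) /\ s x).

(* Both directions compare uniform covers with open covers through the
   "uniform interior" int(S) = { z | W(z) ⊆ S for some entourage W }, which
   is always open.
   - S_c(O,O) -> S_c(O_U,O) (no Hurewicz needed): replace each uniform cover
     {V(x)} by the open cover {int V(x)}; refinements of the latter refine
     the former.
   - S_c(O_U,O) -> S_c(O,O): for an open cover A_n and a point x choose an
     entourage W_{n,x} whose threefold composite around x lies in a member
     a_n(x) of A_n.  The Hurewicz property yields finite sets of centres L_n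
     such that every point eventually lies in some W_{n,x}(x), x ∈ L_n.  The
     finite intersection E_n of the symmetrised W_{n,x}, x ∈ L_n, is an
     entourage; S_c(O_U,O), applied along a Cantor enumeration, gives
     disjoint refinements B_n of {E_n(y)} whose tails all cover G.  Keeping
     in B_n only the sets meeting some W_{n,x}(x), x ∈ L_n, yields the
     required refinements of A_n. *)
From Stdlib Require Import List Arith Cantor IndefiniteDescription.

Section UniformSpace.

Variable G : Type.
Variable U : rel G -> Prop.
Hypothesis HU : uniformity U.

Definition uint (S : set G) : set G :=
  fun z => exists W, U W /\ (forall w, W z w -> S w).

Lemma uint_open (S : set G) : uopen U (uint S).
Proof.
  destruct HU as (_ & _ & _ & _ & _ & Hhalf).
  intros z [W [HW HS]].
  destruct (Hhalf W HW) as [W1 [HW1 Hcomp]].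
  exists W1; split; [exact HW1|].
  intros y Hzy. exists W1; split; [exact HW1|].
  intros w Hyw. apply HS. exact (Hcomp z y w Hzy Hyw).
Qed.

Lemma uint_sub (S : set G) (z : G) : uint S z -> S z.
Proof.
  destruct HU as (_ & Hrefl & _).
  intros [W [HW HS]]. exact (HS z (Hrefl W HW z)).
Qed.

Lemma interior_cover_open (W : G -> rel G) :
  (forall x, U (W x)) ->
  open_cover (uopen U) (fun s => exists x, s = uint (section (W x) x)).
Proof.
  intros HW; split.
  - intros s [x ->]. apply uint_open.
  - intros z. exists (uint (section (W z) z)). split; [exists z; reflexivity|].
    exists (W z); split; [apply HW|]. intros w Hw; exact Hw.
Qed.

(* Direction 1: a selection principle for all open covers applies in
   particular to the open covers by interiors of uniform neighbourhoods. *)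
Lemma Sc_open_to_uniform (BB : (set G -> Prop) -> Prop) :
  Sc (uopen U) (open_cover (uopen U)) BB -> Sc (uopen U) (uniform_cover U) BB.
Proof.
  intros HS A HA.
  destruct (functional_choice
              (fun n V => U V /\ forall s, A n s <-> exists x, s = section V x) HA)
    as [V HV].
  destruct (HS (fun n s => exists x, s = uint (section (V n) x)))
    as [B [HB Hcov]].
  { intros n. apply (interior_cover_open (fun _ => V n)). intros _; apply HV. }
  exists B; split; [|exact Hcov].
  intros n. destruct (HB n) as (Hopen & Hdisj & Href).
  split; [exact Hopen|split; [exact Hdisj|]].
  intros s Hs. destruct (Href s Hs) as [t [[x ->] Hst]].
  exists (section (V n) x). split.
  - apply (proj2 (HV n)). exists x; reflexivity.
  - intros y Hy. apply uint_sub, Hst, Hy.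
Qed.

Lemma open_cover_triple_entourage (A : set G -> Prop) (x : G) :
  open_cover (uopen U) A ->
  exists Ws : rel G * set G, U (fst Ws) /\ A (snd Ws) /\
    forall z y w, fst Ws x z -> fst Ws z y -> fst Ws y w -> snd Ws w.
Proof.
  destruct HU as (_ & Hrefl & _ & _ & _ & Hhalf).
  intros [Hopen Hcover].
  destruct (Hcover x) as [s [Hs Hx]].
  destruct (Hopen s Hs x Hx) as [V [HV HVs]].
  destruct (Hhalf V HV) as [W1 [HW1 Hcomp1]].
  destruct (Hhalf W1 HW1) as [W2 [HW2 Hcomp2]].
  exists (W2, s). simpl. split; [exact HW2|split; [exact Hs|]].
  intros z y w Hxz Hzy Hyw. apply HVs. apply (Hcomp1 x y w).
  - exact (Hcomp2 x z y Hxz Hzy).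
  - exact (Hcomp2 y w w Hyw (Hrefl W2 HW2 w)).
Qed.

Lemma finite_intersection_entourage (W : G -> rel G) (l : list G) :
  (forall x, U (W x)) ->
  U (fun a b => forall x, In x l -> W x a b /\ W x b a).
Proof.
  destruct HU as (Hne & _ & Hup & Hint & Hsym & _).
  intros HW. induction l as [|x l IH].
  - destruct Hne as [V HV]. apply (Hup V); [exact HV|]. intros a b _ x [].
  - apply (Hup (fun a b => (W x a b /\ W x b a) /\
                           (forall y, In y l -> W y a b /\ W y b a))).
    + apply Hint; [apply Hint; [apply HW|apply Hsym, HW]|exact IH].
    + intros a b [Hx Hl] y [<-|Hy]; [exact Hx|exact (Hl y Hy)].
Qed.

Lemma list_witnesses (P : G -> set G -> Prop) (l : list (set G)) :
  (forall s, In s l -> exists x, P x s) ->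
  exists lx : list G, forall s, In s l -> exists x, In x lx /\ P x s.
Proof.
  induction l as [|s l IH]; intros H.
  - exists nil. intros s [].
  - destruct IH as [lx Hlx]. { intros t Ht. apply H. right; exact Ht. }
    destruct (H s (or_introl eq_refl)) as [x Hx].
    exists (x :: lx). intros t [<-|Ht].
    + exists x. split; [left; reflexivity|exact Hx].
    + destruct (Hlx t Ht) as [y [Hy Hyt]]. exists y. split; [right; exact Hy|exact Hyt].
Qed.

Lemma hurewicz_centres (W : nat -> G -> rel G) :
  hurewicz (uopen U) -> (forall n x, U (W n x)) ->
  exists L : nat -> list G, forall z, exists N, forall n, N <= n ->
    exists x, In x (L n) /\ W n x x z.
Proof.
  intros Hh HW.
  destruct (Hh (fun n s => exists x, s = uint (section (W n x) x))) as [F [HF Hev]].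
  { intros n. apply interior_cover_open, HW. }
  destruct (functional_choice _ (fun n =>
              list_witnesses (fun x s => s = uint (section (W n x) x)) (F n)
                             (HF n)))
    as [L HL].
  exists L. intros z. destruct (Hev z) as [N HN]. exists N. intros n Hn.
  destruct (HN n Hn) as [s [Hs Hz]]. destruct (HL n s Hs) as [x [Hx ->]].
  exists x. split; [exact Hx|]. exact (uint_sub _ _ Hz).
Qed.

(* Apply the principle, for each k, to
   the entourages indexed by the Cantor codes of (k, j), j ∈ ℕ; all these
   codes are at least k. *)
Lemma Sc_uniform_tails (E : nat -> rel G) :
  Sc (uopen U) (uniform_cover U) (open_cover (uopen U)) ->
  (forall n, U (E n)) ->
  exists B : nat -> (set G -> Prop),
    (forall n, (forall s, B n s -> uopen U s) /\ pairwise_disjoint (B n) /\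
               refines (B n) (fun s => exists y, s = section (E n) y)) /\
    (forall z N, exists n s, N <= n /\ B n s /\ s z).
Proof.
  intros HS HE.
  assert (Hrow : forall k, exists Bk : nat -> (set G -> Prop),
    (forall j, (forall s, Bk j s -> uopen U s) /\ pairwise_disjoint (Bk j) /\
       refines (Bk j) (fun s => exists y, s = section (E (to_nat (k, j))) y)) /\
    open_cover (uopen U) (fun s => exists j, Bk j s)).
  { intros k. apply HS. intros j. exists (E (to_nat (k, j))).
    split; [apply HE|]. intros s; reflexivity. }
  destruct (functional_choice _ Hrow) as [BB HBB].
  exists (fun n => BB (fst (of_nat n)) (snd (of_nat n))). split.
  - intros n. destruct (of_nat n) as [k j] eqn:Hkj. simpl.
    replace n with (to_nat (k, j)) by (rewrite <- Hkj; apply cancel_to_of).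
    apply (proj1 (HBB k)).
  - intros z N. destruct (proj2 (proj2 (HBB N)) z) as [s [[j Hs] Hz]].
    exists (to_nat (N, j)), s. rewrite cancel_of_to. cbn [fst snd].
    split; [|split; [exact Hs|exact Hz]].
    exact (Nat.le_trans _ _ _ (Nat.le_add_l N j) (to_nat_non_decreasing N j)).
Qed.

Lemma Sc_uniform_to_open :
  hurewicz (uopen U) ->
  Sc (uopen U) (uniform_cover U) (open_cover (uopen U)) ->
  Sc (uopen U) (open_cover (uopen U)) (open_cover (uopen U)).
Proof.
  intros Hh HS A HA.
  destruct (functional_choice _
              (fun p : nat * G => open_cover_triple_entourage (A (fst p)) (snd p)
                                                              (HA (fst p))))
    as [f Hf].
  set (W := fun n x => fst (f (n, x))).
  set (a := fun n x => snd (f (n, x))).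
  assert (HW : forall n x, U (W n x)) by (intros n x; apply (Hf (n, x))).
  assert (Ha : forall n x, A n (a n x)) by (intros n x; apply (Hf (n, x))).
  assert (Htriple : forall n x z y w, W n x x z -> W n x z y -> W n x y w -> a n x w)
    by (intros n x; apply (Hf (n, x))).
  destruct (hurewicz_centres W Hh HW) as [L HL].
  set (E := fun n a b => forall x, In x (L n) -> W n x a b /\ W n x b a).
  destruct (Sc_uniform_tails E HS (fun n => finite_intersection_entourage _ _ (HW n)))
    as [B [HB Htail]].
  exists (fun n s => B n s /\ exists z, s z /\ exists x, In x (L n) /\ W n x x z).
  split; [|split].
  - intros n. destruct (HB n) as (Hopen & Hdisj & Href).
    split; [intros s [Hs _]; exact (Hopen s Hs)|split].
    + intros s t [Hs _] [Ht _]. exact (Hdisj s t Hs Ht).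
    + (* s ⊆ E_n(y) meets W_{n,x}(x) at z; so every w ∈ s is reached from x
         by the chain x -W- z -W- y -W- w and lies in a_n(x). *)
      intros s [Hs [z [Hz [x [Hx Hxz]]]]].
      destruct (Href s Hs) as [t [[y ->] Hst]].
      exists (a n x). split; [apply Ha|]. intros w Hw.
      apply (Htriple n x z y w Hxz).
      * exact (proj2 (Hst z Hz x Hx)).
      * exact (proj1 (Hst w Hw x Hx)).
  - intros s [n [Hs _]]. exact (proj1 (HB n) s Hs).
  - intros z. destruct (HL z) as [N HN].
    destruct (Htail z N) as [n [s [Hn [Hs Hz]]]].
    exists s. split; [|exact Hz].
    exists n. split; [exact Hs|]. exists z. split; [exact Hz|]. exact (HN n Hn).
Qed.

End UniformSpace.

Theorem theorem5p1 (G : Type) (U : rel G -> Prop) :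
  uniformity U -> hurewicz (uopen U) ->
  (Sc (uopen U) (uniform_cover U) (open_cover (uopen U)) <->
   Sc (uopen U) (open_cover (uopen U)) (open_cover (uopen U))).
Proof.
  intros HU Hh. split.
  - exact (Sc_uniform_to_open G U HU Hh).
  - exact (Sc_open_to_uniform G U HU (open_cover (uopen U))).
Qed.
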